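(* Let $\mathbb K=[-1,1]$ and $H(x,p)=v_+(x)(e^{2p}-1)+v_-(x)(e^{-2p}-1)$, where $v_\pm:[-1,1]\to[0,\infty)$ satisfy: $v_-(-1)=0$, $v_-(x)>0$ for $x\ne-1$, $v_+(1)=0$, $v_+(x)>0$ for $x\ne1$; $v_\pm$ extend to $C^2$ functions on an open set containing $[-1,1]$; $v_+'(1)<0$ and $v_-'(-1)>0$. Then $H$ satisfies Condition (H).
   Context: The Lagrangian is $\mathcal L(x,v)=\sup_{p\in\mathbb R}(pv-H(x,p))\in(-\infty,\infty]$. Condition (H) on $H:[-1,1]\times\mathbb R\to\mathbb R$: $H(x,0)=0$ for all $x$, and (H1) $H$ is $C^2$ with $\partial_p^2H>0$ on $[-1,1]\times\mathbb R$ and is the restriction of a $C^2$ function on $(-1-\epsilon,1+\epsilon)\times\mathbb R$ for some $\epsilon>0$. (H2) for every compact $K\subseteq(-1,1)$ there is $\theta_K:[0,\infty)\to[0,\infty)$ with $\theta_K(r)/r\to\infty$ as $r\to\infty$; for every $M\ge0$ a constant $k_M$ with $\theta_K(r+m)\le k_M(1+\theta_K(r))$ for all $m\in[0,M]$, $r\ge0$; constants $c_K,C_K$ with $\mathcal L(x,v)\ge\theta_K(|v|)-c_K$ and $|\partial_x\mathcal L(x,v)|+|\partial_v\mathcal L(x,v)|\le C_K\theta_K(|v|)$ for all $x\in K,v\in\mathbb R$. (H3) for each compact $K\subseteq(-1,1)$, $\lim_{|p|\to\infty}\inf_{x\in K}H(x,p)/|p|=\infty$; moreover $\lim_{p\to\infty}H(-1,p)/p=\infty$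 and $\lim_{p\to-\infty}H(1,p)/(-p)=\infty$. (H4) $\lim_{x\to-1}\operatorname{argmin}_pH(x,p)=-\infty$ and $\lim_{x\to1}\operatorname{argmin}_pH(x,p)=+\infty$. (H5) there are $(y_n^+,q_n^+)\in(-1,1)\times(0,\infty)$ converging to $(1,+\infty)$ with $\partial_pH(y_n^+,q)\ge0$ for $q\ge q_n^+$ and $-\partial_xH(y,q_n^+)\ge0$ for $y\ge y_n^+$, and $(y_n^-,q_n^-)\in(-1,1)\times(-\infty,0)$ converging to $(-1,-\infty)$ with $\partial_pH(y_n^-,q)\le0$ for $q\le q_n^-$ and $-\partial_xH(y,q_n^-)\le0$ for $y\le y_n^-$. *)

From Stdlib Require Import Reals Lra Classical ClassicalEpsilon.
Open Scope R_scope.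

Definition cont2_on (U : R -> R -> Prop) (f : R -> R -> R) : Prop :=
  forall x p, U x p -> forall e, 0 < e -> exists d, 0 < d /\
    forall y q, U y q -> Rabs (y - x) < d -> Rabs (q - p) < d ->
      Rabs (f y q - f x p) < e.

Definition C2_on (U : R -> R -> Prop)
  (G Gx Gp Gxx Gxp Gpx Gpp : R -> R -> R) : Prop :=
  (forall x p, U x p ->
     derivable_pt_lim (fun y => G y p) x (Gx x p) /\
     derivable_pt_lim (fun q => G x q) p (Gp x p) /\
     derivable_pt_lim (fun y => Gx y p) x (Gxx x p) /\
     derivable_pt_lim (fun q => Gx x q) p (Gxp x p) /\
     derivable_pt_lim (fun y => Gp y p) x (Gpx x p) /\
     derivable_pt_lim (fun q => Gp x q) p (Gpp x p)) /\
  cont2_on U G /\ cont2_on U Gx /\ cont2_on U Gp /\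
  cont2_on U Gxx /\ cont2_on U Gxp /\ cont2_on U Gpx /\ cont2_on U Gpp.

Definition C2_on1 (U : R -> Prop) (g g1 g2 : R -> R) : Prop :=
  forall x, U x ->
    derivable_pt_lim g x (g1 x) /\ derivable_pt_lim g1 x (g2 x) /\
    continuity_pt g2 x.

Definition lag_set (H : R -> R -> R) (x v : R) : R -> Prop :=
  fun y => exists p, y = p * v - H x p.

Definition lag_finite (H : R -> R -> R) (x v : R) : Prop :=
  exists l, is_lub (lag_set H x v) l.

(* The Lagrangian L(x,v) = sup_p (p v - H(x,p)) (meaningful when finite). *)
Definition Lag (H : R -> R -> R) (x v : R) : R :=
  epsilon (inhabits 0) (fun l => is_lub (lag_set H x v) l).

Definition is_argmin (H : R -> R -> R) (x p : R) : Prop :=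
  forall q, H x p <= H x q.

Definition subset_open_interval (K : R -> Prop) : Prop :=
  forall x, K x -> -1 < x < 1.

(* Condition (H) on H : [-1,1] x R -> R (H given as a total function;
   only its values on [-1,1] x R matter). *)
Definition ConditionH (H : R -> R -> R) : Prop :=
  (forall x, -1 <= x <= 1 -> H x 0 = 0) /\
  exists eps G Gx Gp Gxx Gxp Gpx Gpp,
    0 < eps /\
    C2_on (fun x _ => -1 - eps < x < 1 + eps) G Gx Gp Gxx Gxp Gpx Gpp /\
    (forall x p, -1 <= x <= 1 -> G x p = H x p) /\
    (forall x p, -1 <= x <= 1 -> 0 < Gpp x p) /\
    (forall K : R -> Prop, compact K -> subset_open_interval K ->
      exists theta : R -> R,
        (forall r, 0 <= r -> 0 <= theta r) /\
        (forall M, exists R0, 0 < R0 /\ forall r, R0 < r -> M < theta r / r) /\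
        (forall M, 0 <= M -> exists kM, forall m r, 0 <= m <= M -> 0 <= r ->
            theta (r + m) <= kM * (1 + theta r)) /\
        exists cK CK, forall x v, K x ->
          lag_finite H x v /\
          theta (Rabs v) - cK <= Lag H x v /\
          exists Lx Lv,
            derivable_pt_lim (fun y => Lag H y v) x Lx /\
            derivable_pt_lim (fun w => Lag H x w) v Lv /\
            Rabs Lx + Rabs Lv <= CK * theta (Rabs v)) /\
    (forall K : R -> Prop, compact K -> subset_open_interval K ->
      forall M, exists R0, 0 < R0 /\ forall p, R0 < Rabs p ->
        forall x, K x -> M < H x p / Rabs p) /\
    (forall M, exists R0, 0 < R0 /\ forall p, R0 < p -> M < H (-1) p / p) /\
    (forall M, exists R0, 0 < R0 /\ forall p, p < - R0 -> M < H 1 p / (- p)) /\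
    (forall M, exists d, 0 < d /\ forall x, -1 < x < 1 -> x < -1 + d ->
        (exists p, is_argmin H x p) /\ (forall p, is_argmin H x p -> p < - M)) /\
    (forall M, exists d, 0 < d /\ forall x, -1 < x < 1 -> 1 - d < x ->
        (exists p, is_argmin H x p) /\ (forall p, is_argmin H x p -> M < p)) /\
    (* (H5); partial derivatives are those of the C^2 extension G, which
       agree with (one-sided) partial derivatives of H on [-1,1] x R *)
    (exists yp qp : nat -> R,
        (forall n, -1 < yp n < 1 /\ 0 < qp n) /\
        Un_cv yp 1 /\ cv_infty qp /\
        (forall n q, qp n <= q -> 0 <= Gp (yp n) q) /\
        (forall n y, yp n <= y <= 1 -> 0 <= - Gx y (qp n))) /\
    (exists ym qm : nat -> R,
        (forall n, -1 < ym n < 1 /\ qm n < 0) /\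
        Un_cv ym (-1) /\ cv_infty (fun n => - qm n) /\
        (forall n q, q <= qm n -> Gp (ym n) q <= 0) /\
        (forall n y, -1 <= y <= ym n -> - Gx y (qm n) <= 0)).

Definition Hex (vp vm : R -> R) (x p : R) : R :=
  vp x * (exp (2 * p) - 1) + vm x * (exp (- (2 * p)) - 1).

From Stdlib Require Import Reals Lra Classical ClassicalEpsilon.
From Stdlib Require Import List FunctionalExtensionality PropExtensionality.
From Coquelicot Require Import Coquelicot.
Open Scope R_scope.

(* With a = v_+(x) and b = v_-(x), H(x,p) = a (e^(2p) - 1) + b (e^(-2p) - 1).
   Where a, b > 0 the Legendre transform is explicit: the supremum of
   p v - H(x,p) is attained where e^(2p) is the positive root s of
   2 a s^2 - v s - 2 b, and by the envelope theorem its derivatives are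
   -(a' (s - 1) + b' (1/s - 1)) in x and ln(s)/2 in v.  On a compact subset of
   (-1,1) the coefficients are bounded above and away from 0, so s and 1/s grow
   at most linearly in |v|; this gives (H2) with theta(r) = 1 + r + r ln(1+r)/4
   and the superlinearity (H3).  The minimiser of H(x,.) is ln(b/a)/4, which
   tends to -oo (resp. +oo) at the endpoint where b (resp. a) vanishes: (H4).
   For (H5), once p exceeds b/a the term a e^(2p) dominates, and near x = 1 the
   negative slope v_+' makes -dH/dx grow like e^(2p).  Since Condition (H) only
   sees H on [-1,1] x R, we may work with the C^2 extensions of v_+, v_-. *)

(** * The Legendre transform of the two-exponential Hamiltonian *)

Definition hexp (a b p : R) : R :=
  a * (exp (2 * p) - 1) + b * (exp (- (2 * p)) - 1).

Lemma Hex_hexp (vp vm : R -> R) x p : Hex vp vm x p = hexp (vp x) (vm x) p.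
Proof. reflexivity. Qed.

Lemma hexp_opp a b p : hexp a b (- p) = hexp b a p.
Proof. unfold hexp. rewrite <- Ropp_mult_distr_r, Ropp_involutive. ring. Qed.

(* The value of [e^(2p)] at the maximiser of [p v - hexp a b p]: the positive
   root of [2 a s^2 - v s - 2 b]. *)
Definition opt_exp (a b v : R) : R := (v + sqrt (v * v + 16 * a * b)) / (4 * a).

Definition lagr (a b v : R) : R :=
  ln (opt_exp a b v) / 2 * v - a * (opt_exp a b v - 1) - b * (/ opt_exp a b v - 1).

Lemma opt_exp_spec a b v : 0 < a -> 0 < b ->
  0 < opt_exp a b v /\ 2 * a * opt_exp a b v * opt_exp a b v - v * opt_exp a b v - 2 * b = 0.
Proof.
  intros ha hb.
  pose proof (sqrt_pos (v * v + 16 * a * b)) as hS0.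
  pose proof (sqrt_sqrt (v * v + 16 * a * b) ltac:(nra)) as hS.
  set (S := sqrt (v * v + 16 * a * b)) in *.
  assert (hvS : 0 < v + S) by nra.
  assert (E : 4 * a * opt_exp a b v = v + S) by (unfold opt_exp; fold S; field; lra).
  set (s := opt_exp a b v) in *.
  split; [nra|].
  assert (8 * a * (2 * a * s * s - v * s - 2 * b) = 0) by nra.
  apply Rmult_integral in H as [H|H]; lra.
Qed.

Lemma lagr_lub a b v : 0 < a -> 0 < b ->
  is_lub (fun y => exists p, y = p * v - hexp a b p) (lagr a b v).
Proof.
  intros ha hb. destruct (opt_exp_spec a b v ha hb) as [hs hroot].
  set (s := opt_exp a b v) in *. set (p0 := ln s / 2).
  assert (E1 : exp (2 * p0) = s)
    by (unfold p0; replace (2 * (ln s / 2)) with (ln s) by field; apply exp_ln; lra).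
  assert (E2 : exp (- (2 * p0)) = / s) by (rewrite exp_Ropp, E1; reflexivity).
  assert (HL : lagr a b v = p0 * v - hexp a b p0)
    by (unfold hexp; rewrite E1, E2; unfold lagr, p0; fold s; ring).
  split.
  - (* [e^t >= 1 + t] at [t = +-2 (p - p0)], combined with the root equation *)
    intros y [p ->]. rewrite HL. unfold hexp.
    replace (exp (2 * p)) with (s * exp (2 * (p - p0)))
      by (rewrite <- E1, <- exp_plus; f_equal; ring).
    replace (exp (- (2 * p))) with (/ s * exp (- (2 * (p - p0))))
      by (rewrite <- E2, <- exp_plus; f_equal; ring).
    pose proof (exp_ineq1_le (2 * (p - p0))). pose proof (exp_ineq1_le (- (2 * (p - p0)))).
    assert (hb2 : 2 * b = 2 * a * s * s - v * s) by lra.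
    assert (hv : v = 2 * a * s - 2 * b * / s) by (rewrite hb2; field; lra).
    assert (0 < / s) by (apply Rinv_0_lt_compat; lra).
    assert (a * s * exp (2 * (p - p0)) >= a * s * (1 + 2 * (p - p0)))
      by (apply Rle_ge, Rmult_le_compat_l; [nra|lra]).
    assert (b * / s * exp (- (2 * (p - p0))) >= b * / s * (1 + - (2 * (p - p0))))
      by (apply Rle_ge, Rmult_le_compat_l; [nra|lra]).
    rewrite hv. nra.
  - intros l Hl. apply Hl. exists p0. exact HL.
Qed.

Lemma Lag_Hex (vp vm : R -> R) x v : 0 < vp x -> 0 < vm x ->
  lag_finite (Hex vp vm) x v /\ Lag (Hex vp vm) x v = lagr (vp x) (vm x) v.
Proof.
  intros ha hb. pose proof (lagr_lub (vp x) (vm x) v ha hb) as H.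
  split; [exists (lagr (vp x) (vm x) v); exact H|].
  unfold Lag. apply (is_lub_u (lag_set (Hex vp vm) x v)); [|exact H].
  apply epsilon_spec. exists (lagr (vp x) (vm x) v). exact H.
Qed.

Lemma lagr_ge a b v p : 0 < a -> 0 < b -> p * v - hexp a b p <= lagr a b v.
Proof. intros ha hb. apply (lagr_lub a b v ha hb). exists p. reflexivity. Qed.

(* Envelope theorem: at the maximiser, the derivative of the optimal value in
   [s] vanishes thanks to the root equation. *)
Lemma envelope_derive (a b v s : R -> R) x da db dv ds :
  0 < s x -> is_derive a x da -> is_derive b x db -> is_derive v x dv ->
  is_derive s x ds -> 2 * a x * s x * s x - v x * s x - 2 * b x = 0 ->
  is_derive (fun y => ln (s y) / 2 * v y - a y * (s y - 1) - b y * (/ s y - 1)) x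
    (ln (s x) / 2 * dv - da * (s x - 1) - db * (/ s x - 1)).
Proof.
  intros hs Ha Hb Hv Hs Hroot.
  assert (Ea := is_derive_unique _ _ _ Ha). assert (Eb := is_derive_unique _ _ _ Hb).
  assert (Ev := is_derive_unique _ _ _ Hv). assert (Es := is_derive_unique _ _ _ Hs).
  auto_derive.
  - repeat split; try (eexists; eassumption); lra.
  - change (Derive (fun y => a y) x) with (Derive a x).
    change (Derive (fun y => b y) x) with (Derive b x).
    change (Derive (fun y => v y) x) with (Derive v x).
    change (Derive (fun y => s y) x) with (Derive s x).
    rewrite Ea, Eb, Ev, Es. apply Rminus_diag_uniq.
    transitivity (- ds * (2 * a x * s x * s x - v x * s x - 2 * b x) / (2 * s x * s x)).
    + field; lra.
    + rewrite Hroot; field; lra.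
Qed.

Lemma lagr_derive_x (a b : R -> R) x v da db : 0 < a x -> 0 < b x ->
  is_derive a x da -> is_derive b x db ->
  is_derive (fun y => lagr (a y) (b y) v) x
    (- (da * (opt_exp (a x) (b x) v - 1) + db * (/ opt_exp (a x) (b x) v - 1))).
Proof.
  intros ha hb Ha Hb.
  destruct (opt_exp_spec (a x) (b x) v ha hb) as [hs hroot].
  assert (Hs : ex_derive (fun y => opt_exp (a y) (b y) v) x).
  { unfold opt_exp. auto_derive. repeat split; try (eexists; eassumption); nra. }
  destruct Hs as [ds Hs].
  replace (- _) with (ln (opt_exp (a x) (b x) v) / 2 * 0 - da * (opt_exp (a x) (b x) v - 1)
                      - db * (/ opt_exp (a x) (b x) v - 1)) by ring.
  apply (envelope_derive a b (fun _ => v) (fun y => opt_exp (a y) (b y) v) x da db 0 ds); auto.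
  auto_derive; auto.
Qed.

Lemma lagr_derive_v a b v : 0 < a -> 0 < b ->
  is_derive (lagr a b) v (ln (opt_exp a b v) / 2).
Proof.
  intros ha hb.
  destruct (opt_exp_spec a b v ha hb) as [hs hroot].
  assert (Hs : ex_derive (opt_exp a b) v).
  { unfold opt_exp. auto_derive. repeat split; nra. }
  destruct Hs as [ds Hs].
  replace (ln (opt_exp a b v) / 2) with (ln (opt_exp a b v) / 2 * 1 - 0 * (opt_exp a b v - 1)
                      - 0 * (/ opt_exp a b v - 1)) by ring.
  apply (envelope_derive (fun _ => a) (fun _ => b) (fun w => w) (opt_exp a b) v 0 0 1 ds); auto.
  all: auto_derive; auto.
Qed.

(** * Growth bounds for the Lagrangian *)

Definition theta (r : R) : R := 1 + r + r * ln (1 + r) / 4.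

Lemma ln_le_sub1 y : 0 < y -> ln y <= y - 1.
Proof. intros hy. pose proof (exp_ineq1_le (ln y)). rewrite exp_ln in H; lra. Qed.

Lemma Rabs_ln_le y : 0 < y -> Rabs (ln y) <= y + / y.
Proof.
  intros hy. pose proof (ln_le_sub1 y hy).
  assert (hy' : 0 < / y) by (apply Rinv_0_lt_compat; lra).
  pose proof (ln_le_sub1 (/ y) hy'). rewrite ln_Rinv in H0 by lra.
  unfold Rabs; destruct Rcase_abs; lra.
Qed.

Lemma ln_1p_ge0 r : 0 <= r -> 0 <= ln (1 + r).
Proof. intros h. rewrite <- ln_1. apply ln_le; lra. Qed.

Lemma theta_ge_1p r : 0 <= r -> 1 + r <= theta r.
Proof. intros h. unfold theta. pose proof (ln_1p_ge0 r h). nra. Qed.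

Lemma theta_ge0 r : 0 <= r -> 0 <= theta r.
Proof. intros h. pose proof (theta_ge_1p r h). lra. Qed.

Lemma theta_superlinear M : exists R0, 0 < R0 /\ forall r, R0 < r -> M < theta r / r.
Proof.
  exists (exp (4 * Rabs M)). split; [apply exp_pos|].
  intros r hr. pose proof (exp_pos (4 * Rabs M)). pose proof (Rle_abs M).
  assert (hl : 4 * Rabs M < ln (1 + r)).
  { rewrite <- (ln_exp (4 * Rabs M)). apply ln_increasing; lra. }
  apply Rmult_lt_reg_r with r; [lra|].
  unfold Rdiv. rewrite Rmult_assoc, Rinv_l, Rmult_1_r by lra.
  unfold theta. nra.
Qed.

Lemma ln_1p_shift r m : 0 <= r -> 0 <= m -> ln (1 + (r + m)) <= ln (1 + r) + m.
Proof.
  intros hr hm. rewrite <- (ln_exp m) at 2. rewrite <- ln_mult by (try apply exp_pos; lra).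
  apply ln_le; [lra|]. pose proof (exp_ineq1_le m). nra.
Qed.

Lemma theta_shift_le M : 0 <= M -> exists kM, forall m r, 0 <= m <= M -> 0 <= r ->
  theta (r + m) <= kM * (1 + theta r).
Proof.
  intros hM. exists (2 + M + M * M). intros m r [hm0 hm] hr.
  pose proof (ln_1p_shift r m hr hm0). pose proof (ln_1p_ge0 r hr).
  pose proof (ln_1p_ge0 (r + m) ltac:(lra)).
  assert (hl : ln (1 + r) <= r) by (pose proof (ln_le_sub1 (1 + r)); lra).
  unfold theta. set (l := ln (1 + r)) in *. set (l' := ln (1 + (r + m))) in *.
  assert ((r + m) * l' <= (r + M) * (l + M)) by (apply Rmult_le_compat; lra).
  assert (0 <= r * l) by nra. assert (0 <= M * r) by nra. assert (M * l <= M * r) by nra.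
  assert (0 <= M * (r * l)) by nra. assert (0 <= M * M * r) by nra.
  assert (0 <= M * M * (r * l)) by nra. assert (0 <= M * M) by nra.
  nra.
Qed.

Lemma hexp_half_ln_le a b r : 0 <= b -> 0 <= r -> hexp a b (ln (1 + r) / 2) <= a * r.
Proof.
  intros hb hr. unfold hexp.
  replace (2 * (ln (1 + r) / 2)) with (ln (1 + r)) by field.
  rewrite exp_Ropp, exp_ln by lra.
  assert (/ (1 + r) <= 1) by (rewrite <- Rinv_1; apply Rinv_le_contravar; lra).
  nra.
Qed.

Lemma lagr_ge_ln a b v A : 0 < a -> 0 < b -> a <= A -> b <= A ->
  Rabs v * ln (1 + Rabs v) / 2 - A * Rabs v <= lagr a b v.
Proof.
  intros ha hb haA hbA.
  destruct (Rcase_abs v) as [hv|hv].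
  - rewrite Rabs_left by lra.
    pose proof (lagr_ge a b v (- (ln (1 + - v) / 2)) ha hb). rewrite hexp_opp in H.
    pose proof (hexp_half_ln_le b a (- v) ltac:(lra) ltac:(lra)).
    pose proof (ln_1p_ge0 (- v) ltac:(lra)). nra.
  - rewrite Rabs_right by lra.
    pose proof (lagr_ge a b v (ln (1 + v) / 2) ha hb).
    pose proof (hexp_half_ln_le a b v ltac:(lra) ltac:(lra)).
    pose proof (ln_1p_ge0 v ltac:(lra)). nra.
Qed.

Lemma theta_sub_le_ln r A : 0 <= r -> 0 <= A ->
  theta r - (1 + (A + 1) * exp (4 * (A + 1))) <= r * ln (1 + r) / 2 - A * r.
Proof.
  intros hr hA. unfold theta. pose proof (ln_1p_ge0 r hr).
  pose proof (exp_pos (4 * (A + 1))). set (l := ln (1 + r)) in *.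
  destruct (Rle_dec (4 * (A + 1)) l) as [h|h].
  - assert (r * (4 * (A + 1)) <= r * l) by (apply Rmult_le_compat_l; lra). nra.
  - assert (1 + r < exp (4 * (A + 1))).
    { apply Rnot_le_lt in h. apply ln_lt_inv; [lra|apply exp_pos|]. rewrite ln_exp. exact h. }
    assert ((A + 1) * r <= (A + 1) * exp (4 * (A + 1))) by (apply Rmult_le_compat_l; lra).
    nra.
Qed.

Lemma opt_exp_bounds a b v d A : 0 < d -> d <= a <= A -> d <= b <= A ->
  opt_exp a b v <= (1 + A) / d * (1 + Rabs v) /\
  / opt_exp a b v <= (1 + A) / d * (1 + Rabs v).
Proof.
  intros hd ha hb.
  destruct (opt_exp_spec a b v ltac:(lra) ltac:(lra)) as [hs hroot].
  pose proof (sqrt_pos (v * v + 16 * a * b)) as hS0.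
  pose proof (sqrt_sqrt (v * v + 16 * a * b) ltac:(nra)) as hS.
  set (S := sqrt (v * v + 16 * a * b)) in *.
  pose proof (Rle_abs v). pose proof (Rle_abs (- v)). rewrite Rabs_Ropp in H0.
  assert (hS4 : S <= Rabs v + 4 * A).
  { assert (Rabs v * Rabs v = v * v) by (rewrite <- Rabs_mult; apply Rabs_right; nra).
    pose proof (Rabs_pos v). nra. }
  assert (hSv : Rabs v < S).
  { apply Rsqr_incrst_0; [|apply Rabs_pos|lra].
    unfold Rsqr. rewrite <- Rabs_mult, Rabs_right by nra. nra. }
  assert (hfrac : forall t c, 0 <= t <= 2 * Rabs v + 4 * A -> d <= c ->
    t / (4 * c) <= (1 + A) / d * (1 + Rabs v)).
  { intros t c ht hc. apply Rle_trans with ((2 * Rabs v + 4 * A) / (4 * d)).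
    - unfold Rdiv. apply Rmult_le_compat; [lra|left; apply Rinv_0_lt_compat; lra|lra|].
      apply Rinv_le_contravar; lra.
    - replace ((2 * Rabs v + 4 * A) / (4 * d)) with ((Rabs v / 2 + A) * / d) by (field; lra).
      replace ((1 + A) / d * (1 + Rabs v)) with ((1 + A) * (1 + Rabs v) * / d) by (field; lra).
      apply Rmult_le_compat_r; [left; apply Rinv_0_lt_compat|pose proof (Rabs_pos v)]; nra. }
  split.
  - unfold opt_exp. fold S. apply hfrac; lra.
  - replace (/ opt_exp a b v) with ((S - v) / (4 * b)).
    + apply hfrac; lra.
    + apply (Rmult_eq_reg_r (opt_exp a b v)); [|lra]. rewrite Rinv_l by lra.
      unfold opt_exp. fold S.
      replace ((S - v) / (4 * b) * ((v + S) / (4 * a))) with ((S * S - v * v) / (16 * a * b))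
        by (field; lra).
      rewrite hS. field; lra.
Qed.

Lemma lagr_derivs_bound a b v d A D da db : 0 < d -> d <= a <= A -> d <= b <= A ->
  Rabs da <= D -> Rabs db <= D ->
  Rabs (- (da * (opt_exp a b v - 1) + db * (/ opt_exp a b v - 1)))
    + Rabs (ln (opt_exp a b v) / 2)
  <= ((2 * D + 1) * ((1 + A) / d) + 2 * D) * theta (Rabs v).
Proof.
  intros hd ha hb Ha Hb.
  destruct (opt_exp_spec a b v ltac:(lra) ltac:(lra)) as [hs _].
  destruct (opt_exp_bounds a b v d A hd ha hb) as [h1 h2].
  assert (hsi : 0 < / opt_exp a b v) by (apply Rinv_0_lt_compat; lra).
  set (s := opt_exp a b v) in *.
  pose proof (Rabs_ln_le s hs). pose proof (Rabs_pos v).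
  pose proof (theta_ge_1p (Rabs v) ltac:(lra)).
  assert (hC : 0 <= (1 + A) / d) by (apply Rdiv_le_0_compat; lra).
  set (C := (1 + A) / d) in *. set (T := theta (Rabs v)) in *.
  assert (e1 : Rabs (- (da * (s - 1) + db * (/ s - 1))) <= D * (s + 1) + D * (/ s + 1)).
  { rewrite Rabs_Ropp. eapply Rle_trans; [apply Rabs_triang|]. rewrite !Rabs_mult.
    apply Rplus_le_compat; apply Rmult_le_compat; try apply Rabs_pos; auto;
      unfold Rabs; destruct Rcase_abs; lra. }
  assert (e2 : Rabs (ln s / 2) <= (s + / s) / 2).
  { unfold Rdiv. rewrite Rabs_mult, (Rabs_right (/ 2)) by lra. lra. }
  assert (0 <= D) by (pose proof (Rabs_pos da); lra).
  assert (C * (1 + Rabs v) <= C * T) by (apply Rmult_le_compat_l; lra).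
  nra.
Qed.

Lemma continuity_pt_eps f x0 : continuity_pt f x0 -> forall e, 0 < e ->
  exists d, 0 < d /\ forall x, Rabs (x - x0) < d -> Rabs (f x - f x0) < e.
Proof.
  intros Hc e he. apply continuity_pt_filterlim in Hc.
  apply filterlim_locally with (eps := mkposreal e he) in Hc.
  destruct Hc as [d Hd]. exists d. split; [apply cond_pos|]. intros x hx. exact (Hd x hx).
Qed.

Lemma C2_on1_continuity U g g1 g2 x : C2_on1 U g g1 g2 -> U x ->
  continuity_pt g x /\ continuity_pt g1 x /\ continuity_pt g2 x.
Proof.
  intros H Ux. destruct (H x Ux) as [h1 [h2 h3]].
  repeat split; auto; apply derivable_continuous_pt; eexists; eassumption.
Qed.

Lemma derivable_pt_lim_loc_ext (f g : R -> R) a b x l :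
  a < x < b -> (forall y, a < y < b -> f y = g y) ->
  derivable_pt_lim f x l -> derivable_pt_lim g x l.
Proof.
  intros hx hfg Hf. apply is_derive_Reals. apply is_derive_Reals in Hf.
  apply (is_derive_ext_loc f); [|exact Hf].
  assert (hd : 0 < Rmin (x - a) (b - x)) by (apply Rmin_pos; lra).
  exists (mkposreal _ hd). intros y hy. apply hfg.
  change (Rabs (y - x) < Rmin (x - a) (b - x)) in hy.
  pose proof (Rmin_l (x - a) (b - x)). pose proof (Rmin_r (x - a) (b - x)).
  apply Rabs_def2 in hy. lra.
Qed.

Lemma continuity_bounded (f : R -> R) a b : a <= b ->
  (forall c, a <= c <= b -> continuity_pt f c) ->
  exists B, 0 <= B /\ forall x, a <= x <= b -> Rabs (f x) <= B.
Proof.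
  intros hab Hc.
  destruct (continuity_ab_maj f a b hab Hc) as [M1 [HM1 _]].
  destruct (continuity_ab_min f a b hab Hc) as [M2 [HM2 _]].
  exists (Rabs (f M1) + Rabs (f M2)). split; [pose proof (Rabs_pos (f M1)); pose proof (Rabs_pos (f M2)); lra|].
  intros x hx. specialize (HM1 x hx). specialize (HM2 x hx).
  unfold Rabs; repeat destruct Rcase_abs; lra.
Qed.

Lemma continuity_pos_bounded_below (f : R -> R) a b : a <= b ->
  (forall c, a <= c <= b -> continuity_pt f c) -> (forall c, a <= c <= b -> 0 < f c) ->
  exists d, 0 < d /\ forall x, a <= x <= b -> d <= f x.
Proof.
  intros hab Hc Hp.
  destruct (continuity_ab_min f a b hab Hc) as [m [Hm hm]].
  exists (f m). split; [apply Hp, hm|exact Hm].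
Qed.

Lemma list_pos_lower_bound (l : list R) : (forall t, In t l -> 0 < t) ->
  exists e, 0 < e /\ forall t, In t l -> e <= t.
Proof.
  induction l as [|a l IH]; intros H.
  - exists 1. split; [lra|]. intros t [].
  - destruct IH as [e [he He]]; [intros t Ht; apply H; right; exact Ht|].
    exists (Rmin a e). split; [apply Rmin_pos; auto; apply H; left; auto|].
    intros t [<-|Ht]; [apply Rmin_l|]. eapply Rle_trans; [apply Rmin_r|]. apply He, Ht.
Qed.

Lemma compact_in_segment (K : R -> Prop) : compact K -> subset_open_interval K ->
  exists c d, -1 < c /\ c <= d /\ d < 1 /\ forall x, K x -> c <= x <= d.
Proof.
  intros HK Hsub.
  set (fam := fun t x => (0 < t < 1) /\ -1 + t < x < 1 - t).
  assert (cf : forall t, (exists y, fam t y) -> 0 < t < 1) by (intros t [y [h _]]; exact h).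
  set (F := mkfamily (fun t => 0 < t < 1) fam cf).
  assert (Hcov : covering_open_set K F).
  { split.
    - intros x Kx. destruct (Hsub x Kx). exists ((1 - Rabs x) / 2). simpl. unfold fam.
      destruct (Rcase_abs x); [rewrite Rabs_left by lra|rewrite Rabs_right by lra]; lra.
    - intros t z [ht hz]. simpl in *.
      assert (hd : 0 < Rmin (z - (-1 + t)) ((1 - t) - z)) by (apply Rmin_pos; lra).
      exists (mkposreal _ hd). intros y Hy. unfold disc in Hy; simpl in Hy.
      pose proof (Rmin_l (z - (-1 + t)) ((1 - t) - z)).
      pose proof (Rmin_r (z - (-1 + t)) ((1 - t) - z)).
      apply Rabs_def2 in Hy. unfold fam. lra. }
  destruct (HK F Hcov) as [D [Hc [l Hl]]].
  destruct (list_pos_lower_bound l) as [e [he He]].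
  { intros t Ht. apply Hl in Ht. destruct Ht as [Ht _]. simpl in Ht. lra. }
  set (e' := Rmin e (1 / 2)).
  assert (he' : 0 < e') by (apply Rmin_pos; lra).
  assert (e'1 : e' <= 1 / 2) by apply Rmin_r.
  assert (e'2 : e' <= e) by apply Rmin_l.
  exists (-1 + e'), (1 - e'). split; [lra|split; [lra|split; [lra|]]].
  intros x Kx. destruct (Hc x Kx) as [t [[ht hx] Dt]]. simpl in *.
  assert (Hin : In t l) by (apply Hl; split; auto; destruct ht; auto).
  pose proof (He t Hin). lra.
Qed.

Lemma open_set_strip (U : R -> Prop) : open_set U -> (forall x, -1 <= x <= 1 -> U x) ->
  exists e, 0 < e /\ forall x, -1 - e < x < 1 + e -> U x.
Proof.
  intros HU Hin.
  destruct (HU (-1) (Hin (-1) ltac:(lra))) as [d1 H1].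
  destruct (HU 1 (Hin 1 ltac:(lra))) as [d2 H2].
  exists (Rmin d1 d2). split; [apply Rmin_pos; apply cond_pos|].
  intros x hx. pose proof (Rmin_l d1 d2). pose proof (Rmin_r d1 d2).
  destruct (Rle_dec x (-1)); [apply H1; unfold disc; rewrite Rabs_left1; lra|].
  destruct (Rle_dec x 1); [apply Hin; lra|].
  apply H2. unfold disc. rewrite Rabs_right; lra.
Qed.

Lemma INR_unbounded A : exists N : nat, A < INR N.
Proof. destruct (INR_archimed 1 A ltac:(lra)) as [n hn]. exists n. lra. Qed.

Definition vanishing_seq (eta : R) (n : nat) : R := eta / (INR n + 2).

Lemma vanishing_seq_bounds eta n : 0 < eta -> 0 < vanishing_seq eta n <= eta / 2.
Proof.
  intros he. pose proof (pos_INR n). unfold vanishing_seq.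
  split; [apply Rdiv_lt_0_compat; lra|].
  unfold Rdiv. apply Rmult_le_compat_l; [lra|apply Rinv_le_contravar; lra].
Qed.

Lemma vanishing_seq_cv eta : 0 < eta -> Un_cv (vanishing_seq eta) 0.
Proof.
  intros he eps heps. destruct (INR_unbounded (eta / eps)) as [N hN].
  exists N. intros n hn. unfold R_dist, vanishing_seq.
  apply le_INR in hn. pose proof (pos_INR N).
  rewrite Rminus_0_r, Rabs_right by (apply Rle_ge, Rdiv_le_0_compat; lra).
  assert (eta / eps * eps = eta) by (field; lra).
  apply (Rmult_lt_reg_r (INR n + 2)); [lra|].
  unfold Rdiv at 1. rewrite Rmult_assoc, Rinv_l, Rmult_1_r by lra. nra.
Qed.

Lemma cv_infty_ge_INR (u : nat -> R) : (forall n, INR n <= u n) -> cv_infty u.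
Proof.
  intros Hu M. destruct (INR_unbounded M) as [N hN]. exists N. intros n hn.
  apply le_INR in hn. specialize (Hu n). lra.
Qed.

Definition Hex_p (a b : R -> R) (x p : R) : R :=
  a x * (2 * exp (2 * p)) + b x * (-2 * exp (- (2 * p))).

Definition Hex_pp (a b : R -> R) (x p : R) : R :=
  a x * (4 * exp (2 * p)) + b x * (4 * exp (- (2 * p))).

Lemma derivable_pt_lim_lincomb (a b : R -> R) x da db c1 c2 :
  derivable_pt_lim a x da -> derivable_pt_lim b x db ->
  derivable_pt_lim (fun y => a y * c1 + b y * c2) x (da * c1 + db * c2).
Proof.
  intros Ha Hb. apply is_derive_Reals in Ha, Hb. apply is_derive_Reals.
  assert (Ea := is_derive_unique _ _ _ Ha). assert (Eb := is_derive_unique _ _ _ Hb).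
  auto_derive; [repeat split; eexists; eassumption|].
  change (Derive (fun y => a y) x) with (Derive a x).
  change (Derive (fun y => b y) x) with (Derive b x).
  rewrite Ea, Eb. ring.
Qed.

Lemma Hex_derive_x (a b a1 b1 : R -> R) x p :
  derivable_pt_lim a x (a1 x) -> derivable_pt_lim b x (b1 x) ->
  derivable_pt_lim (fun y => Hex a b y p) x (Hex a1 b1 x p).
Proof. apply derivable_pt_lim_lincomb. Qed.

Lemma Hex_p_derive_x (a b a1 b1 : R -> R) x p :
  derivable_pt_lim a x (a1 x) -> derivable_pt_lim b x (b1 x) ->
  derivable_pt_lim (fun y => Hex_p a b y p) x (Hex_p a1 b1 x p).
Proof. apply derivable_pt_lim_lincomb. Qed.

Lemma Hex_derive_p (a b : R -> R) x p :
  derivable_pt_lim (fun q => Hex a b x q) p (Hex_p a b x p).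
Proof. apply is_derive_Reals. unfold Hex, Hex_p. auto_derive; auto. ring. Qed.

Lemma Hex_p_derive_p (a b : R -> R) x p :
  derivable_pt_lim (fun q => Hex_p a b x q) p (Hex_pp a b x p).
Proof. apply is_derive_Reals. unfold Hex_p, Hex_pp. auto_derive; auto. ring. Qed.

Lemma cont2_on_lincomb (U : R -> R -> Prop) (a b e1 e2 : R -> R) :
  (forall x p, U x p -> continuity_pt a x /\ continuity_pt b x) ->
  (forall p, ex_derive e1 p /\ ex_derive e2 p) ->
  cont2_on U (fun x p => a x * e1 p + b x * e2 p).
Proof.
  intros Hx Hp x p Uxp e he.
  destruct (Hx x p Uxp) as [ca cb]. destruct (Hp p) as [c1 c2].
  apply continuity_pt_filterlim in ca, cb.
  apply (ex_derive_continuous (K := R_AbsRing) (V := R_NormedModule)) in c1, c2.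
  assert (C : continuous (fun z : R * R =>
     plus (mult (a (fst z)) (e1 (snd z))) (mult (b (fst z)) (e2 (snd z)))) (x, p)).
  { apply (continuous_plus (K := R_AbsRing) (V := R_NormedModule));
      apply (continuous_mult (K := R_AbsRing));
      (apply continuous_comp; [first [apply continuous_fst | apply continuous_snd]
                              | simpl; assumption]). }
  apply filterlim_locally with (eps := mkposreal e he) in C.
  destruct C as [d Hd]. exists d. split; [apply cond_pos|].
  intros y q _ hy hq. exact (Hd (y, q) (conj hy hq)).
Qed.

Lemma C2_on_Hex (S : R -> Prop) (a b a1 b1 a2 b2 : R -> R) :
  C2_on1 S a a1 a2 -> C2_on1 S b b1 b2 ->
  C2_on (fun x _ => S x) (Hex a b) (Hex a1 b1) (Hex_p a b) (Hex a2 b2)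
    (Hex_p a1 b1) (Hex_p a1 b1) (Hex_pp a b).
Proof.
  intros Ha Hb.
  assert (Hc : forall x, S x -> (continuity_pt a x /\ continuity_pt b x) /\
     (continuity_pt a1 x /\ continuity_pt b1 x) /\ (continuity_pt a2 x /\ continuity_pt b2 x)).
  { intros x Sx. destruct (C2_on1_continuity S a a1 a2 x Ha Sx) as [? [? ?]].
    destruct (C2_on1_continuity S b b1 b2 x Hb Sx) as [? [? ?]]. tauto. }
  split.
  { intros x p Sx. destruct (Ha x Sx) as [a' [a'' _]]. destruct (Hb x Sx) as [b' [b'' _]].
    repeat split; auto using Hex_derive_x, Hex_p_derive_x, Hex_derive_p, Hex_p_derive_p. }
  repeat split; apply cont2_on_lincomb; try (intros x p Sx; apply Hc, Sx);
    intros p; split; auto_derive; auto.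
Qed.

(** * Superlinearity, minimisers and sign conditions *)

Lemma hexp_superlinear a b A d M p : 0 < d -> d <= a -> 0 <= b -> b <= A ->
  (Rabs M + A + 1) / d + 1 < p -> M < hexp a b p / p.
Proof.
  intros hd ha hb hbA hp. pose proof (Rabs_pos M). pose proof (Rle_abs M).
  assert (0 <= (Rabs M + A + 1) / d) by (apply Rdiv_le_0_compat; lra).
  assert (hdp : Rabs M + A + 1 < d * p).
  { replace (Rabs M + A + 1) with (d * ((Rabs M + A + 1) / d)) by (field; lra). nra. }
  assert (he : (1 + p) * (1 + p) <= exp (2 * p)).
  { replace (2 * p) with (p + p) by ring. rewrite exp_plus.
    pose proof (exp_ineq1_le p). nra. }
  pose proof (exp_pos (- (2 * p))).
  apply (Rmult_lt_reg_r p); [lra|].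
  unfold Rdiv. rewrite Rmult_assoc, Rinv_l, Rmult_1_r by lra.
  unfold hexp. nra.
Qed.

Lemma hexp_min a b q : 0 < a -> 0 < b -> q <> ln (b / a) / 4 ->
  hexp a b (ln (b / a) / 4) < hexp a b q.
Proof.
  intros ha hb hq. set (p0 := ln (b / a) / 4) in *.
  pose proof (exp_pos (2 * p0)). pose proof (exp_pos (- (2 * p0))).
  assert (E : a * exp (2 * p0) = b * exp (- (2 * p0))).
  { rewrite exp_Ropp. apply (Rmult_eq_reg_r (exp (2 * p0))); [|lra].
    rewrite Rmult_assoc, <- exp_plus, Rmult_assoc, Rinv_l by lra.
    replace (2 * p0 + 2 * p0) with (ln (b / a)) by (unfold p0; field).
    rewrite exp_ln by (apply Rdiv_lt_0_compat; lra). field. lra. }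
  unfold hexp.
  replace (exp (2 * q)) with (exp (2 * p0) * exp (2 * (q - p0)))
    by (rewrite <- exp_plus; f_equal; ring).
  replace (exp (- (2 * q))) with (exp (- (2 * p0)) * exp (- (2 * (q - p0))))
    by (rewrite <- exp_plus; f_equal; ring).
  pose proof (exp_ineq1 (2 * (q - p0)) ltac:(intro; apply hq; lra)).
  pose proof (exp_ineq1 (- (2 * (q - p0))) ltac:(intro; apply hq; lra)).
  assert (a * exp (2 * p0) * exp (2 * (q - p0)) > a * exp (2 * p0) * (1 + 2 * (q - p0)))
    by (apply Rmult_gt_compat_l; nra).
  assert (b * exp (- (2 * p0)) * exp (- (2 * (q - p0)))
          > b * exp (- (2 * p0)) * (1 + - (2 * (q - p0))))
    by (apply Rmult_gt_compat_l; nra).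
  nra.
Qed.

Lemma Hex_argmin_iff (vp vm : R -> R) x p : 0 < vp x -> 0 < vm x ->
  is_argmin (Hex vp vm) x p <-> p = ln (vm x / vp x) / 4.
Proof.
  intros ha hb. split.
  - intros Hp. destruct (Req_dec p (ln (vm x / vp x) / 4)) as [|hne]; auto.
    specialize (Hp (ln (vm x / vp x) / 4)). pose proof (hexp_min _ _ p ha hb hne).
    rewrite !Hex_hexp in Hp. lra.
  - intros -> q. rewrite !Hex_hexp.
    destruct (Req_dec q (ln (vm x / vp x) / 4)) as [->|hne]; [lra|].
    left. apply hexp_min; auto.
Qed.

Lemma ln_div4_lt r M : 0 < r -> r < exp (- (4 * M)) -> ln r / 4 < - M.
Proof. intros hr h. apply ln_increasing in h; [|exact hr]. rewrite ln_exp in h. lra. Qed.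

Lemma exp_balance a b q : 0 < a -> 0 <= b -> b / a <= q ->
  b * exp (- (2 * q)) <= a * exp (2 * q).
Proof.
  intros ha hb hq. pose proof (exp_ineq1_le (4 * q)). pose proof (exp_pos (- (2 * q))).
  assert (hm : b <= a * exp (4 * q)).
  { assert (0 <= b / a) by (apply Rdiv_le_0_compat; lra).
    replace b with (a * (b / a)) at 1 by (field; lra). apply Rmult_le_compat_l; lra. }
  replace (exp (2 * q)) with (exp (4 * q) * exp (- (2 * q)))
    by (rewrite <- exp_plus; f_equal; ring).
  nra.
Qed.

Lemma hexp_ge0_slope a b c B q : 0 < c -> c <= a -> Rabs b <= B -> B / c + 1 <= q ->
  0 <= hexp a b q.
Proof.
  intros hc ha hb hq. pose proof (Rle_abs b). pose proof (Rabs_pos b).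
  assert (hBc : 0 <= B / c) by (apply Rdiv_le_0_compat; lra).
  pose proof (exp_ineq1_le (2 * q)). pose proof (exp_pos (- (2 * q))).
  assert (exp (- (2 * q)) <= 1) by (rewrite <- exp_0; left; apply exp_increasing; lra).
  assert (hbq : - B <= b * (exp (- (2 * q)) - 1)).
  { assert (0 <= (B - b) * (1 - exp (- (2 * q)))) by (apply Rmult_le_pos; lra). nra. }
  assert (hcq : B + c <= c * q).
  { replace (B + c) with (c * (B / c + 1)) by (field; lra). apply Rmult_le_compat_l; lra. }
  unfold hexp. nra.
Qed.

Lemma ratio_small_near (f g : R -> R) c M : continuity_pt f c -> continuity_pt g c ->
  f c = 0 -> 0 < g c -> exists d, 0 < d /\ forall x, Rabs (x - c) < d -> f x / g x < exp (- (4 * M)).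
Proof.
  intros Hf Hg hf hg.
  assert (Hr : continuity_pt (f / g)%F c) by (apply continuity_pt_div; auto; lra).
  destruct (continuity_pt_eps _ c Hr (exp (- (4 * M))) (exp_pos _)) as [d [hd Hd]].
  exists d. split; [exact hd|]. intros x hx. specialize (Hd x hx).
  unfold div_fct in Hd. rewrite hf in Hd. unfold Rdiv at 2 in Hd.
  rewrite Rmult_0_l, Rminus_0_r in Hd. pose proof (Rle_abs (f x / g x)). lra.
Qed.

(** * Condition (H) for the extended coefficients *)

Section HexCondition.

Variables (gp gm gp1 gm1 gp2 gm2 : R -> R) (eps : R).
Hypothesis eps_pos : 0 < eps.
Hypothesis gp_C2 : C2_on1 (fun x => -1 - eps < x < 1 + eps) gp gp1 gp2.
Hypothesis gm_C2 : C2_on1 (fun x => -1 - eps < x < 1 + eps) gm gm1 gm2.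
Hypothesis gp_pos : forall x, -1 <= x < 1 -> 0 < gp x.
Hypothesis gm_pos : forall x, -1 < x <= 1 -> 0 < gm x.
Hypothesis gp_1 : gp 1 = 0.
Hypothesis gm_m1 : gm (-1) = 0.
Hypothesis gp1_1 : gp1 1 < 0.
Hypothesis gm1_m1 : 0 < gm1 (-1).

Lemma coeffs_continuity x : -1 <= x <= 1 ->
  continuity_pt gp x /\ continuity_pt gm x /\ continuity_pt gp1 x /\ continuity_pt gm1 x.
Proof.
  intros hx. assert (hs : -1 - eps < x < 1 + eps) by lra.
  destruct (C2_on1_continuity _ _ _ _ x gp_C2 hs) as [? [? _]].
  destruct (C2_on1_continuity _ _ _ _ x gm_C2 hs) as [? [? _]]. tauto.
Qed.

Lemma coeffs_bounds_on_compact K : compact K -> subset_open_interval K ->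
  exists d A, 0 < d /\ 0 <= A /\ forall x, K x -> -1 < x < 1 /\ d <= gp x <= A /\ d <= gm x <= A.
Proof.
  intros HK Hsub.
  destruct (compact_in_segment K HK Hsub) as [c [d [hc [hcd [hd Hcd]]]]].
  destruct (continuity_pos_bounded_below gp c d hcd) as [dp [hdp Hdp]];
    [intros; apply coeffs_continuity; lra|intros; apply gp_pos; lra|].
  destruct (continuity_pos_bounded_below gm c d hcd) as [dm [hdm Hdm]];
    [intros; apply coeffs_continuity; lra|intros; apply gm_pos; lra|].
  destruct (continuity_bounded gp (-1) 1) as [Bp [hBp HBp]];
    [lra|intros; apply coeffs_continuity; lra|].
  destruct (continuity_bounded gm (-1) 1) as [Bm [hBm HBm]];
    [lra|intros; apply coeffs_continuity; lra|].
  exists (Rmin dp dm), (Bp + Bm). split; [apply Rmin_pos; auto|split; [lra|]].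
  intros x Kx. pose proof (Hcd x Kx). pose proof (Hsub x Kx).
  pose proof (Rmin_l dp dm). pose proof (Rmin_r dp dm).
  pose proof (Hdp x ltac:(lra)). pose proof (Hdm x ltac:(lra)).
  pose proof (HBp x ltac:(lra)). pose proof (HBm x ltac:(lra)).
  pose proof (Rle_abs (gp x)). pose proof (Rle_abs (gm x)).
  pose proof (Rabs_pos (gp x)). pose proof (Rabs_pos (gm x)). lra.
Qed.

Lemma Lag_Hex_interior x v : -1 < x < 1 ->
  lag_finite (Hex gp gm) x v /\ Lag (Hex gp gm) x v = lagr (gp x) (gm x) v.
Proof. intros hx. apply Lag_Hex; [apply gp_pos|apply gm_pos]; lra. Qed.

Lemma Hex_cond_H2 (K : R -> Prop) : compact K -> subset_open_interval K ->
  exists theta : R -> R,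
    (forall r, 0 <= r -> 0 <= theta r) /\
    (forall M, exists R0, 0 < R0 /\ forall r, R0 < r -> M < theta r / r) /\
    (forall M, 0 <= M -> exists kM, forall m r, 0 <= m <= M -> 0 <= r ->
        theta (r + m) <= kM * (1 + theta r)) /\
    exists cK CK, forall x v, K x ->
      lag_finite (Hex gp gm) x v /\
      theta (Rabs v) - cK <= Lag (Hex gp gm) x v /\
      exists Lx Lv,
        derivable_pt_lim (fun y => Lag (Hex gp gm) y v) x Lx /\
        derivable_pt_lim (fun w => Lag (Hex gp gm) x w) v Lv /\
        Rabs Lx + Rabs Lv <= CK * theta (Rabs v).
Proof.
  intros HK Hsub.
  destruct (coeffs_bounds_on_compact K HK Hsub) as [d [A [hd [hA HdA]]]].
  destruct (continuity_bounded gp1 (-1) 1) as [Dp [hDp HDp]];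
    [lra|intros; apply coeffs_continuity; lra|].
  destruct (continuity_bounded gm1 (-1) 1) as [Dm [hDm HDm]];
    [lra|intros; apply coeffs_continuity; lra|].
  set (D := Dp + Dm).
  exists theta. split; [exact theta_ge0|]. split; [exact theta_superlinear|].
  split; [exact theta_shift_le|].
  exists (1 + (A + 1) * exp (4 * (A + 1))), ((2 * D + 1) * ((1 + A) / d) + 2 * D).
  intros x v Kx. destruct (HdA x Kx) as [hx [ha hb]].
  destruct (Lag_Hex_interior x v hx) as [Hfin HL].
  split; [exact Hfin|]. split.
  { rewrite HL. eapply Rle_trans; [apply theta_sub_le_ln; [apply Rabs_pos|lra]|].
    apply lagr_ge_ln; lra. }
  set (s := opt_exp (gp x) (gm x) v).
  exists (- (gp1 x * (s - 1) + gm1 x * (/ s - 1))), (ln s / 2). split; [|split].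
  - apply (derivable_pt_lim_loc_ext (fun y => lagr (gp y) (gm y) v) _ (-1) 1); [lra| |].
    + intros y hy. symmetry. apply Lag_Hex_interior, hy.
    + apply is_derive_Reals, lagr_derive_x; try lra;
        apply is_derive_Reals; [apply gp_C2|apply gm_C2]; lra.
  - apply (derivable_pt_lim_loc_ext (lagr (gp x) (gm x)) _ (v - 1) (v + 1)); [lra| |].
    + intros w _. symmetry. apply Lag_Hex_interior, hx.
    + apply is_derive_Reals, lagr_derive_v; lra.
  - apply (lagr_derivs_bound (gp x) (gm x) v d A D); auto.
    + pose proof (HDp x ltac:(lra)). unfold D. lra.
    + pose proof (HDm x ltac:(lra)). unfold D. lra.
Qed.

Lemma Hex_cond_H3 (K : R -> Prop) : compact K -> subset_open_interval K ->
  forall M, exists R0, 0 < R0 /\ forall p, R0 < Rabs p ->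
    forall x, K x -> M < Hex gp gm x p / Rabs p.
Proof.
  intros HK Hsub M.
  destruct (coeffs_bounds_on_compact K HK Hsub) as [d [A [hd [hA HdA]]]].
  assert (0 <= (Rabs M + A + 1) / d)
    by (apply Rdiv_le_0_compat; [pose proof (Rabs_pos M)|]; lra).
  exists ((Rabs M + A + 1) / d + 1). split; [lra|].
  intros p hp x Kx. destruct (HdA x Kx) as [hx [ha hb]]. rewrite Hex_hexp.
  destruct (Rcase_abs p) as [hn|hn].
  - rewrite (Rabs_left p) in hp |- * by lra. rewrite <- (Ropp_involutive p) at 1. rewrite hexp_opp.
    apply (hexp_superlinear _ _ A d); lra.
  - rewrite (Rabs_right p) in hp |- * by lra. apply (hexp_superlinear _ _ A d); lra.
Qed.

Lemma Hex_cond_H3_left M : exists R0, 0 < R0 /\ forall p, R0 < p -> M < Hex gp gm (-1) p / p.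
Proof.
  pose proof (gp_pos (-1) ltac:(lra)) as ha.
  assert (0 <= (Rabs M + gp (-1) + 1) / gp (-1))
    by (apply Rdiv_le_0_compat; [pose proof (Rabs_pos M)|]; lra).
  exists ((Rabs M + gp (-1) + 1) / gp (-1) + 1). split; [lra|].
  intros p hp. rewrite Hex_hexp, gm_m1. apply (hexp_superlinear _ _ (gp (-1)) (gp (-1))); lra.
Qed.

Lemma Hex_cond_H3_right M : exists R0, 0 < R0 /\ forall p, p < - R0 -> M < Hex gp gm 1 p / (- p).
Proof.
  pose proof (gm_pos 1 ltac:(lra)) as hb.
  assert (0 <= (Rabs M + gm 1 + 1) / gm 1)
    by (apply Rdiv_le_0_compat; [pose proof (Rabs_pos M)|]; lra).
  exists ((Rabs M + gm 1 + 1) / gm 1 + 1). split; [lra|].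
  intros p hp. rewrite Hex_hexp, gp_1, <- (Ropp_involutive p) at 1. rewrite hexp_opp.
  apply (hexp_superlinear _ _ (gm 1) (gm 1)); lra.
Qed.

Lemma Hex_cond_H4_left M : exists d, 0 < d /\ forall x, -1 < x < 1 -> x < -1 + d ->
  (exists p, is_argmin (Hex gp gm) x p) /\ (forall p, is_argmin (Hex gp gm) x p -> p < - M).
Proof.
  destruct (ratio_small_near gm gp (-1) M) as [d [hd Hd]];
    [apply coeffs_continuity; lra|apply coeffs_continuity; lra|exact gm_m1|apply gp_pos; lra|].
  exists d. split; [exact hd|]. intros x hx hxd.
  assert (ha : 0 < gp x) by (apply gp_pos; lra). assert (hb : 0 < gm x) by (apply gm_pos; lra).
  split; [exists (ln (gm x / gp x) / 4); apply Hex_argmin_iff; auto|].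
  intros p Hp. apply Hex_argmin_iff in Hp; auto. rewrite Hp.
  apply ln_div4_lt; [apply Rdiv_lt_0_compat; auto|apply Hd].
  rewrite Rabs_right; lra.
Qed.

Lemma Hex_cond_H4_right M : exists d, 0 < d /\ forall x, -1 < x < 1 -> 1 - d < x ->
  (exists p, is_argmin (Hex gp gm) x p) /\ (forall p, is_argmin (Hex gp gm) x p -> M < p).
Proof.
  destruct (ratio_small_near gp gm 1 M) as [d [hd Hd]];
    [apply coeffs_continuity; lra|apply coeffs_continuity; lra|exact gp_1|apply gm_pos; lra|].
  exists d. split; [exact hd|]. intros x hx hxd.
  assert (ha : 0 < gp x) by (apply gp_pos; lra). assert (hb : 0 < gm x) by (apply gm_pos; lra).
  split; [exists (ln (gm x / gp x) / 4); apply Hex_argmin_iff; auto|].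
  intros p Hp. apply Hex_argmin_iff in Hp; auto. rewrite Hp.
  rewrite <- (Rinv_div (gp x) (gm x)), ln_Rinv by (apply Rdiv_lt_0_compat; auto).
  enough (ln (gp x / gm x) / 4 < - M) by lra.
  apply ln_div4_lt; [apply Rdiv_lt_0_compat; auto|apply Hd].
  rewrite Rabs_left; lra.
Qed.

Lemma Hex_p_sign_right x q : -1 < x < 1 -> gm x / gp x <= q -> 0 <= Hex_p gp gm x q.
Proof.
  intros hx hq. unfold Hex_p.
  pose proof (exp_balance (gp x) (gm x) q ltac:(apply gp_pos; lra)
                ltac:(left; apply gm_pos; lra) hq).
  lra.
Qed.

Lemma Hex_p_sign_left x q : -1 < x < 1 -> gp x / gm x <= - q -> Hex_p gp gm x q <= 0.
Proof.
  intros hx hq. unfold Hex_p.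
  pose proof (exp_balance (gm x) (gp x) (- q) ltac:(apply gm_pos; lra)
                ltac:(left; apply gp_pos; lra) hq).
  rewrite <- Ropp_mult_distr_r, Ropp_involutive in H. lra.
Qed.

Lemma Hex_x_sign_right : exists eta Q, 0 < eta <= 1 /\ 0 < Q /\
  forall y q, 1 - eta < y <= 1 -> Q <= q -> 0 <= - Hex gp1 gm1 y q.
Proof.
  set (c := - gp1 1 / 2). assert (hc : 0 < c) by (unfold c; lra).
  destruct (continuity_pt_eps gp1 1 (proj1 (proj2 (proj2 (coeffs_continuity 1 ltac:(lra)))))
              c hc) as [eta [heta Heta]].
  destruct (continuity_bounded gm1 (-1) 1) as [B [hB HB]];
    [lra|intros; apply coeffs_continuity; lra|].
  assert (0 <= B / c) by (apply Rdiv_le_0_compat; lra).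
  pose proof (Rmin_l eta 1). pose proof (Rmin_r eta 1).
  exists (Rmin eta 1), (B / c + 1).
  split; [split; [apply Rmin_pos|]; lra|]. split; [lra|].
  intros y q hy hq.
  assert (hgy : gp1 y < - c).
  { assert (Rabs (y - 1) < eta) by (rewrite Rabs_left1; lra).
    specialize (Heta y H2). apply Rabs_def2 in Heta. unfold c in *. lra. }
  replace (- Hex gp1 gm1 y q) with (hexp (- gp1 y) (- gm1 y) q) by (unfold Hex, hexp; ring).
  apply (hexp_ge0_slope _ _ c B); [exact hc|lra| |exact hq].
  rewrite Rabs_Ropp. apply HB. lra.
Qed.

Lemma Hex_x_sign_left : exists eta Q, 0 < eta <= 1 /\ 0 < Q /\
  forall y q, -1 <= y < -1 + eta -> Q <= q -> - Hex gp1 gm1 y (- q) <= 0.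
Proof.
  set (c := gm1 (-1) / 2). assert (hc : 0 < c) by (unfold c; lra).
  destruct (continuity_pt_eps gm1 (-1) (proj2 (proj2 (proj2 (coeffs_continuity (-1) ltac:(lra)))))
              c hc) as [eta [heta Heta]].
  destruct (continuity_bounded gp1 (-1) 1) as [B [hB HB]];
    [lra|intros; apply coeffs_continuity; lra|].
  assert (0 <= B / c) by (apply Rdiv_le_0_compat; lra).
  pose proof (Rmin_l eta 1). pose proof (Rmin_r eta 1).
  exists (Rmin eta 1), (B / c + 1).
  split; [split; [apply Rmin_pos|]; lra|]. split; [lra|].
  intros y q hy hq.
  assert (hgy : c < gm1 y).
  { assert (Rabs (y - -1) < eta) by (rewrite Rabs_right; lra).
    specialize (Heta y H2). apply Rabs_def2 in Heta. unfold c in *. lra. }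
  rewrite Hex_hexp, hexp_opp.
  enough (0 <= hexp (gm1 y) (gp1 y) q) by lra.
  apply (hexp_ge0_slope _ _ c B); [exact hc|lra| |exact hq].
  apply HB. lra.
Qed.

Lemma Hex_cond_H5_right : exists yp qp : nat -> R,
  (forall n, -1 < yp n < 1 /\ 0 < qp n) /\ Un_cv yp 1 /\ cv_infty qp /\
  (forall n q, qp n <= q -> 0 <= Hex_p gp gm (yp n) q) /\
  (forall n y, yp n <= y <= 1 -> 0 <= - Hex gp1 gm1 y (qp n)).
Proof.
  destruct Hex_x_sign_right as [eta [Q [[heta heta1] [hQ HQ]]]].
  set (yp n := 1 - vanishing_seq eta n).
  assert (hy : forall n, 1 - eta < yp n < 1)
    by (intros n; pose proof (vanishing_seq_bounds eta n ltac:(lra)); unfold yp; lra).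
  assert (hratio : forall n, 0 <= gm (yp n) / gp (yp n)).
  { intros n. pose proof (hy n). apply Rdiv_le_0_compat; [|apply gp_pos; lra].
    left; apply gm_pos; lra. }
  set (qp n := INR n + Q + gm (yp n) / gp (yp n)).
  assert (hq : forall n, INR n + Q <= qp n /\ gm (yp n) / gp (yp n) <= qp n)
    by (intros n; pose proof (pos_INR n); pose proof (hratio n); unfold qp; lra).
  assert (hcv : Un_cv yp 1).
  { intros e he. destruct (vanishing_seq_cv eta ltac:(lra) e he) as [N HN]. exists N.
    intros n hn. specialize (HN n hn). unfold R_dist in *. unfold yp.
    replace (1 - vanishing_seq eta n - 1) with (- (vanishing_seq eta n - 0)) by ring.
    rewrite Rabs_Ropp. exact HN. }
  clearbody yp qp. exists yp, qp.
  split; [|split; [exact hcv|split; [|split]]].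
  - intros n. destruct (hy n), (hq n). pose proof (pos_INR n).
    split; [split|]; lra.
  - apply cv_infty_ge_INR. intros n. destruct (hq n). pose proof (pos_INR n). lra.
  - intros n q hqn. destruct (hy n), (hq n).
    apply Hex_p_sign_right; lra.
  - intros n y hyn. destruct (hy n), (hq n). pose proof (pos_INR n).
    apply HQ; lra.
Qed.

Lemma Hex_cond_H5_left : exists ym qm : nat -> R,
  (forall n, -1 < ym n < 1 /\ qm n < 0) /\ Un_cv ym (-1) /\ cv_infty (fun n => - qm n) /\
  (forall n q, q <= qm n -> Hex_p gp gm (ym n) q <= 0) /\
  (forall n y, -1 <= y <= ym n -> - Hex gp1 gm1 y (qm n) <= 0).
Proof.
  destruct Hex_x_sign_left as [eta [Q [[heta heta1] [hQ HQ]]]].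
  set (ym n := -1 + vanishing_seq eta n).
  assert (hy : forall n, -1 < ym n < -1 + eta)
    by (intros n; pose proof (vanishing_seq_bounds eta n ltac:(lra)); unfold ym; lra).
  assert (hratio : forall n, 0 <= gp (ym n) / gm (ym n)).
  { intros n. pose proof (hy n). apply Rdiv_le_0_compat; [|apply gm_pos; lra].
    left; apply gp_pos; lra. }
  set (qm n := - (INR n + Q + gp (ym n) / gm (ym n))).
  assert (hq : forall n, INR n + Q <= - qm n /\ gp (ym n) / gm (ym n) <= - qm n)
    by (intros n; pose proof (pos_INR n); pose proof (hratio n); unfold qm; lra).
  assert (hcv : Un_cv ym (-1)).
  { intros e he. destruct (vanishing_seq_cv eta ltac:(lra) e he) as [N HN]. exists N.
    intros n hn. specialize (HN n hn). unfold R_dist in *. unfold ym.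
    replace (-1 + vanishing_seq eta n - -1) with (vanishing_seq eta n - 0) by ring. exact HN. }
  clearbody ym qm. exists ym, qm.
  split; [|split; [exact hcv|split; [|split]]].
  - intros n. destruct (hy n), (hq n). pose proof (pos_INR n).
    split; [split|]; lra.
  - apply cv_infty_ge_INR. intros n. destruct (hq n). pose proof (pos_INR n). lra.
  - intros n q hqn. destruct (hy n), (hq n).
    apply Hex_p_sign_left; lra.
  - intros n y hyn. destruct (hy n), (hq n). pose proof (pos_INR n).
    rewrite <- (Ropp_involutive (qm n)). apply HQ; lra.
Qed.

Lemma Hex_pp_pos x p : -1 <= x <= 1 -> 0 < Hex_pp gp gm x p.
Proof.
  intros hx. unfold Hex_pp. pose proof (exp_pos (2 * p)). pose proof (exp_pos (- (2 * p))).
  destruct (Req_dec x 1) as [->|hne].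
  - rewrite gp_1. pose proof (gm_pos 1 ltac:(lra)). nra.
  - pose proof (gp_pos x ltac:(lra)).
    destruct (Req_dec x (-1)) as [->|hne'].
    + rewrite gm_m1. nra.
    + pose proof (gm_pos x ltac:(lra)). nra.
Qed.

Lemma ConditionH_Hex : ConditionH (Hex gp gm).
Proof.
  split; [intros x _; unfold Hex; rewrite Rmult_0_r, Ropp_0, exp_0; ring|].
  exists eps, (Hex gp gm), (Hex gp1 gm1), (Hex_p gp gm), (Hex gp2 gm2),
    (Hex_p gp1 gm1), (Hex_p gp1 gm1), (Hex_pp gp gm).
  split; [exact eps_pos|]. split; [apply C2_on_Hex; auto|].
  split; [intros; reflexivity|]. split; [exact Hex_pp_pos|].
  split; [exact Hex_cond_H2|]. split; [exact Hex_cond_H3|].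
  split; [exact Hex_cond_H3_left|]. split; [exact Hex_cond_H3_right|].
  split; [exact Hex_cond_H4_left|]. split; [exact Hex_cond_H4_right|].
  split; [exact Hex_cond_H5_right|exact Hex_cond_H5_left].
Qed.

End HexCondition.

(** * Condition (H) only depends on H over [-1,1] *)

Lemma lag_set_ext (H H' : R -> R -> R) x v : (forall p, H x p = H' x p) ->
  lag_set H x v = lag_set H' x v.
Proof.
  intros Heq. apply functional_extensionality. intros y.
  apply propositional_extensionality. unfold lag_set.
  split; intros [p ->]; exists p; rewrite Heq; reflexivity.
Qed.

Lemma Lag_ext (H H' : R -> R -> R) x v : (forall p, H x p = H' x p) ->
  Lag H x v = Lag H' x v /\ (lag_finite H x v -> lag_finite H' x v).
Proof.
  intros Heq. unfold Lag, lag_finite. rewrite (lag_set_ext H H' x v Heq). tauto.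
Qed.

Lemma is_argmin_ext (H H' : R -> R -> R) x p : (forall q, H x q = H' x q) ->
  is_argmin H x p -> is_argmin H' x p.
Proof. intros Heq Hp q. rewrite <- !Heq. apply Hp. Qed.

Lemma ConditionH_ext (H H' : R -> R -> R) :
  (forall x p, -1 <= x <= 1 -> H x p = H' x p) -> ConditionH H -> ConditionH H'.
Proof.
  intros Heq [H0 [eps [G [Gx [Gp [Gxx [Gxp [Gpx [Gpp
    [heps [HC2 [HGH [Hpp [H2 [H3 [H3l [H3r [H4l [H4r H5]]]]]]]]]]]]]]]]]]].
  assert (HLag : forall x v, -1 <= x <= 1 ->
            Lag H x v = Lag H' x v /\ (lag_finite H x v -> lag_finite H' x v))
    by (intros x v hx; apply Lag_ext; intros p; apply Heq, hx).
  assert (Hmin : forall x p, -1 <= x <= 1 -> is_argmin H x p <-> is_argmin H' x p)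
    by (intros x p hx; split; apply is_argmin_ext; intros q; [|symmetry]; apply Heq, hx).
  split; [intros x hx; rewrite <- Heq by exact hx; apply H0, hx|].
  exists eps, G, Gx, Gp, Gxx, Gxp, Gpx, Gpp.
  do 2 (split; [assumption|]).
  split; [intros x p hx; rewrite <- Heq by exact hx; apply HGH, hx|].
  split; [assumption|].
  split.
  { intros K HK Hsub. destruct (H2 K HK Hsub) as [theta [t1 [t2 [t3 [cK [CK HcK]]]]]].
    exists theta. do 3 (split; [assumption|]). exists cK, CK. intros x v Kx.
    pose proof (Hsub x Kx) as hx.
    destruct (HcK x v Kx) as [Hfin [Hlow [Lx [Lv [Hdx [Hdv Hb]]]]]].
    destruct (HLag x v ltac:(lra)) as [<- Hfin'].
    split; [exact (Hfin' Hfin)|]. split; [exact Hlow|].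
    exists Lx, Lv. split; [|split; [|exact Hb]].
    - apply (derivable_pt_lim_loc_ext (fun y => Lag H y v) _ (-1) 1); [lra| |exact Hdx].
      intros y hy. apply HLag. lra.
    - apply (derivable_pt_lim_loc_ext (fun w => Lag H x w) _ (v - 1) (v + 1)); [lra| |exact Hdv].
      intros w _. apply HLag. lra. }
  split.
  { intros K HK Hsub M. destruct (H3 K HK Hsub M) as [R0 [hR0 HR0]].
    exists R0. split; [exact hR0|]. intros p hp x Kx. pose proof (Hsub x Kx).
    rewrite <- Heq by lra. apply HR0; auto. }
  split.
  { intros M. destruct (H3l M) as [R0 [hR0 HR0]]. exists R0. split; [exact hR0|].
    intros p hp. rewrite <- Heq by lra. apply HR0, hp. }
  split.
  { intros M. destruct (H3r M) as [R0 [hR0 HR0]]. exists R0. split; [exact hR0|].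
    intros p hp. rewrite <- Heq by lra. apply HR0, hp. }
  split.
  { intros M. destruct (H4l M) as [d [hd Hd]]. exists d. split; [exact hd|].
    intros x hx hxd. destruct (Hd x hx hxd) as [[p Hp] Hall]. split.
    - exists p. apply Hmin; [lra|exact Hp].
    - intros q Hq. apply Hall, Hmin; [lra|exact Hq]. }
  split.
  { intros M. destruct (H4r M) as [d [hd Hd]]. exists d. split; [exact hd|].
    intros x hx hxd. destruct (Hd x hx hxd) as [[p Hp] Hall]. split.
    - exists p. apply Hmin; [lra|exact Hp].
    - intros q Hq. apply Hall, Hmin; [lra|exact Hq]. }
  exact H5.
Qed.

Theorem lemmaA1 (vp vm : R -> R)
  (hvp_nonneg : forall x, -1 <= x <= 1 -> 0 <= vp x)
  (hvm_nonneg : forall x, -1 <= x <= 1 -> 0 <= vm x)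
  (hvm0 : vm (-1) = 0)
  (hvm_pos : forall x, -1 <= x <= 1 -> x <> -1 -> 0 < vm x)
  (hvp0 : vp 1 = 0)
  (hvp_pos : forall x, -1 <= x <= 1 -> x <> 1 -> 0 < vp x)
  (hvp_C2 : exists (U : R -> Prop) (g g1 g2 : R -> R),
      open_set U /\ (forall x, -1 <= x <= 1 -> U x) /\
      (forall x, -1 <= x <= 1 -> g x = vp x) /\
      C2_on1 U g g1 g2 /\ g1 1 < 0)
  (hvm_C2 : exists (U : R -> Prop) (g g1 g2 : R -> R),
      open_set U /\ (forall x, -1 <= x <= 1 -> U x) /\
      (forall x, -1 <= x <= 1 -> g x = vm x) /\
      C2_on1 U g g1 g2 /\ 0 < g1 (-1)) :
  ConditionH (Hex vp vm).
Proof.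
  destruct hvp_C2 as [Up [gp [gp1 [gp2 [oUp [inUp [eqp [C2p slope_p]]]]]]]].
  destruct hvm_C2 as [Um [gm [gm1 [gm2 [oUm [inUm [eqm [C2m slope_m]]]]]]]].
  (* [hvp_nonneg] and [hvm_nonneg] follow from the positivity hypotheses. *)
  destruct (open_set_strip Up oUp inUp) as [ep [hep Hep]].
  destruct (open_set_strip Um oUm inUm) as [em [hem Hem]].
  pose proof (Rmin_l ep em). pose proof (Rmin_r ep em).
  apply (ConditionH_ext (Hex gp gm)).
  { intros x p hx. unfold Hex. rewrite eqp, eqm by exact hx. reflexivity. }
  apply (ConditionH_Hex gp gm gp1 gm1 gp2 gm2 (Rmin ep em)).
  - apply Rmin_pos; assumption.
  - intros x hx. apply C2p, Hep. lra.
  - intros x hx. apply C2m, Hem. lra.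
  - intros x hx. rewrite eqp by lra. apply hvp_pos; lra.
  - intros x hx. rewrite eqm by lra. apply hvm_pos; lra.
  - rewrite eqp by lra. exact hvp0.
  - rewrite eqm by lra. exact hvm0.
  - exact slope_p.
  - exact slope_m.
Qed.
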